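(* For every $k\ge1$, $gp_k(\mathbf y)=\hat p^K_k(\mathbf y)\big|_{\beta=-1}$ and $gq_k(\mathbf y)=\hat q^K_k(\mathbf y)\big|_{\beta=-1}$.
   Context: $K$-theoretic formal group law: $u+_Fv=u+v+\beta uv$ with $\beta$ invertible, so $\bar u=-u/(1+\beta u)$. Let $\Delta(t;\mathbf y)=\prod_{j\ge1}\frac{1-\bar t\,y_j}{1-t\,y_j}$ for variables $\mathbf y=(y_1,y_2,\ldots)$. Define the symmetric functions $\hat q^K_k(\mathbf y)$ and $\hat p^K_k(\mathbf y)$ ($k\ge0$) by $\Delta(t;\mathbf y)=\sum_{k\ge0}t^k\hat q^K_k(\mathbf y)=\sum_{k\ge0}[[t]]^k\hat p^K_k(\mathbf y)$, where $[[t]]^0=1$ and $[[t]]^k=(t+_Ft)t^{k-1}=(2t+\beta t^2)t^{k-1}$ for $k\ge1$. For a strict partition $\lambda$, $Tab(\lambda)$ is the set of fillings of the (shifted) diagram of $\lambda$ by the ordered alphabet $1'<1<2'<2<\cdots$ with rows and columns weakly increasing, and $Tab'(\lambda)\subset Tab(\lambda)$ consists of those tableaux in which the leftmost box of every row contains a primed letter. For a tableau $T$ set $\mathbf y^T=\prod_{i}y_i^{T_C(i)}\prod_iy_i^{T_R(i')}$, where $T_C(i)$ is the number of columns of $T$ containing the letter $i$ and $T_R(i')$ is the number of rows of $T$ containing $i'$. Then $gp_\lambda(\mathbf y)=\sum_{T\in Tab'(\lambda)}\mathbf y^T$ and $gq_\lambda(\mathbf y)=\sum_{T\in Tab(\lambda)}\mathbf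 y^T$; $gp_k,gq_k$ denote these for the one-row shape $\lambda=(k)$. *)

From HB Require Import structures.
From mathcomp Require Import all_boot all_order all_algebra.
Set Implicit Arguments. Unset Strict Implicit. Unset Printing Implicit Defensive.
Import Order.TTheory GRing.Theory Num.Theory.
Local Open Scope ring_scope.

Definition fps (R : comNzRingType) := nat -> R.

Section FPS.
Variable R : comNzRingType.
Definition fone : fps R := fun m => (m == 0%N)%:R.
Definition fmul (f g : fps R) : fps R :=
  fun m => \sum_(i < m.+1) f i * g (m - i)%N.
Definition fsub (f g : fps R) : fps R := fun m => f m - g m.
Definition fscale (c : R) (f : fps R) : fps R := fun m => c * f m.
Definition tpow (k : nat) : fps R := fun m => (m == k)%:R.
(* 1/(1 - a t) = sum_m a^m t^m *)
Definition geom (a : R) : fps R := fun m => a ^+ m.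

(* K-theoretic FGL with parameter beta; u = t:
   tbar = -t/(1+beta t) = - t * (1/(1 - (-beta) t)) *)
Definition tbar (beta : R) : fps R := fscale (-1) (fmul (tpow 1) (geom (- beta))).

(* Delta(t;y) = prod_j (1 - tbar y_j)/(1 - t y_j), for variables y_0..y_{n-1}
   (all further variables set to 0) *)
Definition Delta (beta : R) (n : nat) (y : 'I_n -> R) : fps R :=
  \big[fmul/fone]_(j < n) fmul (fsub fone (fscale (y j) (tbar beta))) (geom (y j)).

Definition qhatK (beta : R) (n : nat) (y : 'I_n -> R) (k : nat) : R :=
  Delta beta y k.

(* [[t]]^0 = 1, [[t]]^k = (2t + beta t^2) t^(k-1) *)
Definition tbrak (beta : R) (k : nat) : fps R :=
  if k is k'.+1 then
    fmul (fun m => 2%:R * (m == 1%N)%:R + beta * (m == 2%N)%:R) (tpow k')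
  else fone.

(* p is the sequence (hat p^K_k)_k : Delta = sum_k [[t]]^k p_k, compared
   coefficientwise (only k <= m contribute to the coefficient of t^m). *)
Definition IsPhatK (beta : R) (n : nat) (y : 'I_n -> R) (p : nat -> R) : Prop :=
  forall m : nat, Delta beta y m = \sum_(k < m.+1) p k * tbrak beta k m.
End FPS.

(* letter (i, true) = i'  (primed),  (i, false) = i  (unprimed), i : 'I_n
   stands for the letter i+1; order 1' < 1 < 2' < 2 < ... *)
Definition letter (n : nat) := ('I_n * bool)%type.
Definition lrank (n : nat) (a : letter n) : nat := ((a.1 : nat).*2 + ~~ a.2)%N.
Definition lle (n : nat) : rel (letter n) := fun a b => (lrank a <= lrank b)%N.

Definition inTab (n k : nat) (T : k.-tuple (letter n)) : bool := sorted (@lle n) T.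
Definition inTab' (n k : nat) (T : k.-tuple (letter n)) : bool :=
  inTab T && (if tval T is a :: _ then a.2 else true).

(* y^T: T_C(i) = number of columns (= boxes, one row) containing i;
   T_R(i') = number of rows containing i' (0 or 1 here). *)
Definition ymon (R : comNzRingType) (n k : nat) (y : 'I_n -> R)
    (T : k.-tuple (letter n)) : R :=
  \prod_(i < n) y i ^+ (count (fun a : letter n => (a.1 == i) && ~~ a.2) T
                        + ((i, true) \in tval T))%N.

Definition gq (R : comNzRingType) (n : nat) (y : 'I_n -> R) (k : nat) : R :=
  \sum_(T : k.-tuple (letter n) | inTab T) ymon y T.
Definition gp (R : comNzRingType) (n : nat) (y : 'I_n -> R) (k : nat) : R :=
  \sum_(T : k.-tuple (letter n) | inTab' T) ymon y T.

(* Write Q_k = gq_k and P_k = gp_k (k >= 1), P_0 = 0.  The proof computes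
   both sides as coefficients of power series in t and compares them.

   - A one-row tableau is a weakly increasing word in 1' < 1 < 2' < 2 < ...;
     it is a concatenation of blocks, the i-block consisting of a letters i'
     followed by c - a letters i, with monomial y_i^([a > 0] + c - a).  We
     enumerate the words explicitly ([words]) and show the enumeration is
     exact, so gq and gp are coefficients of the series Qgf and Pgf.
   - Adding the variables one at a time, Qgf factors as a product of block
     series blockF_i, which are exactly the factors (1 - tbar y_i)/(1 - t y_i)
     of Delta at beta = -1; hence qhat_k = gq_k.
   - The block series satisfy blockF = (2 - t) blockG + 1, where blockG counts
     blocks starting with a primed letter; by induction on the variables this
     yields Q = (2 - t) P + 1.
   - At beta = -1, [[t]]^k = (2 - t) t^k for k >= 1, so the expansion
     Delta = sum_k phat_k [[t]]^k reads Delta = phat_0 + (2 - t) sum_(k>=1)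
     phat_k t^k; comparing with Q = (2 - t) P + 1 and cancelling the factor
     2 - t (2 is invertible) gives phat_k = P_k = gp_k. *)
From HB Require Import structures.
From mathcomp Require Import all_boot all_order all_algebra.
From mathcomp Require Import zify ring.
Set Implicit Arguments. Unset Strict Implicit. Unset Printing Implicit Defensive.
Import Order.TTheory GRing.Theory Num.Theory.
Local Open Scope ring_scope.

Lemma sum_delta (R : nzSemiRingType) N j (F : nat -> R) :
  \sum_(i < N) F i * ((i : nat) == j)%:R = F j * (j < N)%:R.
Proof.
elim: N => [|N IH]; first by rewrite big_ord0 mulr0.
rewrite big_ord_recr /= IH ltnS.
by case: (ltngtP j N) => [_|_|->]; rewrite ?mulr0n ?mulr0 ?add0r ?addr0.
Qed.

Section SeriesAlgebra.
Variable R : comNzRingType.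
Implicit Types f g h : fps R.

Definition fadd f g : fps R := fun m => f m + g m.

Definition tshift f : fps R := fun m => if m is m'.+1 then f m' else 0.

Definition twoSubT f : fps R := fun m => 2%:R * f m - tshift f m.

Lemma eq_fmul f f' g g' : f =1 f' -> g =1 g' -> fmul f g =1 fmul f' g'.
Proof. by move=> ef eg m; apply: eq_bigr => i _; rewrite ef eg. Qed.

Lemma fmul1l f : fmul (fone R) f =1 f.
Proof.
move=> m; rewrite /fmul big_ord_recl /fone /= mul1r subn0.
by rewrite big1 ?addr0 // => i _; rewrite mul0r.
Qed.

Lemma fmulDl f g h : fmul (fadd f g) h =1 fadd (fmul f h) (fmul g h).
Proof. by move=> m; rewrite /fmul /fadd -big_split; apply: eq_bigr => i _; rewrite mulrDl. Qed.

Lemma eq_twoSubT f g : f =1 g -> twoSubT f =1 twoSubT g.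
Proof. by move=> efg [|m]; rewrite /twoSubT /tshift !efg. Qed.

Lemma twoSubT_fadd f g : twoSubT (fadd f g) =1 fadd (twoSubT f) (twoSubT g).
Proof. by case=> [|m]; rewrite /twoSubT /tshift /fadd; ring. Qed.

Lemma fmul_twoSubT f g : fmul (twoSubT f) g =1 twoSubT (fmul f g).
Proof.
move=> m; rewrite /fmul /twoSubT mulr_sumr.
under eq_bigr do rewrite mulrBl -mulrA.
rewrite sumrB; congr (_ - _); case: m => [|m]; first by rewrite big_ord1 /= mul0r.
by rewrite big_ord_recl /= mul0r add0r.
Qed.

Lemma fmul_tpow f k m : fmul f (tpow R k) m = (k <= m)%:R * f (m - k)%N.
Proof.
rewrite /fmul /tpow mulrC; case: (leqP k m) => km.
  rewrite (eq_bigr (fun i : 'I_m.+1 => f i * ((i : nat) == (m - k)%N)%:R)).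
    by rewrite sum_delta ltnS leq_subr.
  by move=> i _; congr (_ * _%:R); apply/eqP/eqP; have := ltn_ord i; lia.
rewrite mulr0 big1 // => i _.
by rewrite (_ : (m - i == k)%N = false) ?mulr0 //; apply/eqP; lia.
Qed.

Lemma twoSubT_step (F G Q P : fps R) :
  F =1 fadd (twoSubT G) (fone R) -> Q =1 fadd (twoSubT P) (fone R) ->
  fmul F Q =1 fadd (twoSubT (fadd (fmul G Q) P)) (fone R).
Proof.
move=> eF eQ m; rewrite (eq_fmul eF (frefl Q)) fmulDl /fadd fmul1l eQ.
by rewrite fmul_twoSubT twoSubT_fadd /fadd addrA.
Qed.

Lemma tbrak_coef k m :
  tbrak (-1) k.+1 m = 2%:R * (m == k.+1)%:R - (m == k.+2)%:R :> R.
Proof.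
rewrite /tbrak fmul_tpow.
have -> : (m - k == 1)%N = (m == k.+1) by apply/eqP/eqP; lia.
have -> : (m - k == 2)%N = (m == k.+2) by apply/eqP/eqP; lia.
case: (leqP k m) => km; first by rewrite mulr1n mul1r mulN1r.
by rewrite mulr0n mul0r !ltn_eqF ?mulr0 ?subr0 //; lia.
Qed.

Lemma tbrak_expand (p : nat -> R) m :
  \sum_(k < m.+1) p k * tbrak (-1) k m =
  (m == 0)%:R * p 0%N + twoSubT (tshift (fun k => p k.+1)) m.
Proof.
rewrite big_ord_recl /twoSubT /tshift; case: m => [|m].
  by rewrite big_ord0 /tbrak /fone /=; ring.
rewrite (_ : tbrak (-1) ord0 m.+1 = 0) // mulr0 add0r mulr0n mul0r add0r.
under eq_bigr do rewrite lift0 tbrak_coef mulrBr mulrCA !eqSS [m == _]eq_sym.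
rewrite sumrB -mulr_sumr (sum_delta _ _ (fun i => p i.+1)) ltnSn mulr1n mulr1.
congr (_ - _).
case: m => [|m]; first by rewrite big_ord1 mulr0n mulr0.
under eq_bigr do rewrite eqSS eq_sym.
by rewrite (sum_delta _ _ (fun i => p i.+1)) ltnW // mulr1n mulr1.
Qed.
End SeriesAlgebra.

Lemma twoSubT_inj (R : idomainType) (f g : fps R) :
  2%:R != 0 :> R -> twoSubT f =1 twoSubT g -> f =1 g.
Proof.
move=> two_neq0 efg; elim=> [|m IHm].
  by apply: (mulfI two_neq0); have := efg 0%N; rewrite /twoSubT /= !subr0.
by apply: (mulfI two_neq0); have := efg m.+1; rewrite /twoSubT /= IHm => /subIr.
Qed.

Section OneRowWords.
Variable n : nat.
Local Notation L := (letter n).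
Implicit Types (i : 'I_n) (ix : seq 'I_n) (s r : seq L).

Definition ord_lt : rel 'I_n := fun i j => (i < j)%N.

Definition supported ix s : bool := all (fun l : L => l.1 \in ix) s.

Definition block i (c a : nat) : seq L := nseq a (i, true) ++ nseq (c - a) (i, false).

Definition block_shapes (k : nat) : seq (nat * nat) :=
  [seq (c, a) | c <- iota 0 k.+1, a <- iota 0 c.+1].

Fixpoint words ix k : seq (seq L) :=
  if ix is i :: ix' then
    [seq block i x.1 x.2 ++ r | x <- block_shapes k, r <- words ix' (k - x.1)%N]
  else if k is 0 then [:: [::]] else [::].

Lemma words_cons i ix k : words (i :: ix) k =
  [seq block i x.1 x.2 ++ r | x <- block_shapes k, r <- words ix (k - x.1)%N].
Proof. by []. Qed.

Lemma mem_block_shapes k c a :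
  ((c, a) \in block_shapes k) = (c <= k)%N && (a <= c)%N.
Proof.
apply/allpairsPdep/andP => [[c' [a' [+ + [-> ->]]]] | [ck ac]].
  by rewrite !mem_iota; lia.
by exists c, a; rewrite !mem_iota; split => //; lia.
Qed.

Lemma mem_words_cons i ix k s :
  reflect (exists c a r, [/\ (c <= k)%N, (a <= c)%N, r \in words ix (k - c)
                           & s = block i c a ++ r])
          (s \in words (i :: ix) k).
Proof.
apply: (iffP allpairsPdep) => [[[c a] [r [+ wr ->]]] | [c [a [r [ck ac wr ->]]]]].
  by rewrite mem_block_shapes => /andP[ck ac]; exists c, a, r.
by exists (c, a), r; rewrite mem_block_shapes ck ac.
Qed.

Lemma size_block i c a : (a <= c)%N -> size (block i c a) = c.
Proof. by move=> ac; rewrite size_cat !size_nseq subnKC. Qed.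

Lemma words_size_supported ix k s :
  s \in words ix k -> size s = k /\ supported ix s.
Proof.
elim: ix k s => [|i ix IH] k s /=; first by case: k => // /[!inE] /eqP ->.
case/mem_words_cons => c [a [r [ck ac /IH[sr supr] ->]]].
split; first by rewrite size_cat size_block // sr subnKC.
rewrite /supported all_cat /block all_cat !all_nseq mem_head !orbT /=.
by apply: sub_all supr => l /= lix; rewrite inE lix orbT.
Qed.

Lemma lrank_inj : injective (@lrank n).
Proof.
move=> [i u] [j v]; rewrite /lrank /= -!mul2n => e.
have uv : u = v by move: e; case: u; case: v => /=; lia.
by subst v; congr pair; apply: val_inj => /=; lia.
Qed.

Lemma lle_trans : transitive (@lle n).
Proof. by move=> a b c; apply: leq_trans. Qed.

Lemma lle_anti : antisymmetric (@lle n).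
Proof. by move=> a b /anti_leq/lrank_inj. Qed.

Lemma lle_index_lt i b (l : L) : ord_lt i l.1 -> lle (i, b) l.
Proof. by case: l => j u; rewrite /ord_lt /lle /lrank /= -!mul2n; case: b; case: u => /=; lia. Qed.

Lemma sorted_nseq (l : L) m : sorted (@lle n) (nseq m l).
Proof. by elim: m => [|[|m] IH] //=; rewrite /lle leqnn. Qed.

Lemma sorted_cat_allrel s1 s2 :
  sorted (@lle n) s1 -> sorted (@lle n) s2 -> allrel (@lle n) s1 s2 ->
  sorted (@lle n) (s1 ++ s2).
Proof. by rewrite !(sorted_pairwise lle_trans) pairwise_cat => -> -> ->. Qed.

Lemma sorted_block_cat i ix c a r :
  all (ord_lt i) ix -> supported ix r -> sorted (@lle n) r ->
  sorted (@lle n) (block i c a ++ r).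
Proof.
move=> iix supr sr.
have le_r b : all (lle (i, b)) r.
  by apply/allP => l lr; apply: lle_index_lt; apply: (allP iix); apply: (allP supr).
rewrite /block -catA; apply: sorted_cat_allrel; rewrite ?sorted_nseq //.
  apply: sorted_cat_allrel; rewrite ?sorted_nseq //.
  by apply/allrelP => _ l /nseqP[-> _]; apply: (allP (le_r _)).
apply/allrelP => _ l /nseqP[-> _]; rewrite mem_cat => /orP[/nseqP[-> _] | ].
  by rewrite /lle /lrank leq_add2l.
exact: (allP (le_r _)).
Qed.

Lemma sorted_ord_lt_cons i ix : sorted ord_lt (i :: ix) -> all (ord_lt i) ix.
Proof. by rewrite /= path_sortedE => [/andP[] | ? ? ?]; last exact: ltn_trans. Qed.

Lemma sorted_ord_lt_notin i ix : sorted ord_lt (i :: ix) -> i \notin ix.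
Proof. by move/sorted_ord_lt_cons => iix; apply/negP => /(allP iix); rewrite /ord_lt ltnn. Qed.

Lemma words_sorted ix k s : sorted ord_lt ix -> s \in words ix k -> sorted (@lle n) s.
Proof.
elim: ix k s => [|i ix IH] k s /=; first by case: k => // _ /[!inE] /eqP ->.
move=> six /mem_words_cons[c [a [r [_ _ wr ->]]]].
have [_ supr] := words_size_supported wr.
apply: sorted_block_cat supr (IH _ _ (path_sorted six) wr).
exact: sorted_ord_lt_cons.
Qed.

Lemma perm_filter3 (T : eqType) (q1 q2 q3 : pred T) (t : seq T) :
  all (fun x => (q1 x + q2 x + q3 x == 1)%N) t ->
  perm_eq t (filter q1 t ++ filter q2 t ++ filter q3 t).
Proof.
move=> q123; apply/permP => p; rewrite !count_cat !count_filter.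
elim: t q123 => //= x t IH /andP[qx /IH ->].
by move: qx; case: (p x); case: (q1 x); case: (q2 x); case: (q3 x) => //= _; lia.
Qed.

Lemma filter_pred1_nseq (T : eqType) (x : T) (t : seq T) :
  filter (pred1 x) t = nseq (count_mem x t) x.
Proof. by rewrite -size_filter; apply/all_pred1P/filter_all. Qed.

Lemma block_decomposition i ix s :
  sorted ord_lt (i :: ix) -> sorted (@lle n) s -> supported (i :: ix) s ->
  s = block i (count_mem (i, true) s + count_mem (i, false) s) (count_mem (i, true) s)
        ++ filter (fun l : L => l.1 \in ix) s.
Proof.
move=> six ss sups; set r := filter _ s.
have iix := sorted_ord_lt_cons six; have i_notin := sorted_ord_lt_notin six.
apply: (sorted_eq lle_trans lle_anti) => //.
  by apply: sorted_block_cat iix (filter_all _ _) (sorted_filter lle_trans _ ss).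
rewrite /block addKn -!filter_pred1_nseq -catA; apply: perm_filter3.
apply/allP => -[j b] jb; have := allP sups _ jb; rewrite inE /= {jb}.
case: (eqVneq j i) => [-> _ | ji /= jix].
  by rewrite (negbTE i_notin) !xpair_eqE eqxx; case: b.
by rewrite !xpair_eqE (negbTE ji) jix.
Qed.

Lemma words_complete ix s :
  sorted ord_lt ix -> sorted (@lle n) s -> supported ix s -> s \in words ix (size s).
Proof.
elim: ix s => [|i ix IH] s six ss sups; first by case: s ss sups.
rewrite [in X in X \in _](block_decomposition six ss sups).
set a := count_mem _ s; set c := (a + _)%N; set r := filter _ s.
have ac : (a <= c)%N by apply: leq_addr.
have size_s : size s = (c + size r)%N.
  by rewrite [in LHS](block_decomposition six ss sups) size_cat size_block.
apply/mem_words_cons; exists c, a, r; split => //; first by rewrite size_s leq_addr.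
rewrite size_s addKn; apply: IH (path_sorted six) (sorted_filter lle_trans _ ss) _.
exact: filter_all.
Qed.

Lemma count_block_cat i ix c a r b :
  i \notin ix -> supported ix r ->
  count_mem (i, b) (block i c a ++ r) = if b then a else (c - a)%N.
Proof.
move=> i_notin supr; rewrite /block !count_cat !count_nseq (_ : count_mem _ r = 0%N).
  by rewrite /= !xpair_eqE !eqxx; case: b; rewrite /= ?mul1n ?mul0n ?addn0.
apply/eqP; rewrite -leqn0 leqNgt -has_count; apply/hasP => -[l lr /eqP el].
by move: (allP supr l lr); rewrite el /= (negbTE i_notin).
Qed.

Lemma block_cat_inj i ix c a r c' a' r' :
  i \notin ix -> supported ix r -> supported ix r' -> (a <= c)%N -> (a' <= c')%N ->
  block i c a ++ r = block i c' a' ++ r' -> [/\ c = c', a = a' & r = r'].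
Proof.
move=> i_notin supr supr' ac ac' e.
have ea : a = a'.
  move: (congr1 (count_mem (i, true)) e).
  by rewrite (count_block_cat _ _ _ i_notin supr) (count_block_cat _ _ _ i_notin supr').
have ec : c = c'.
  move: (congr1 (count_mem (i, false)) e).
  rewrite (count_block_cat _ _ _ i_notin supr) (count_block_cat _ _ _ i_notin supr').
  by rewrite ea; lia.
subst a' c'; split => //; move: (congr1 (drop c) e).
by rewrite -{1 3}(size_block i ac) !drop_size_cat.
Qed.

Lemma words_uniq ix k : sorted ord_lt ix -> uniq (words ix k).
Proof.
elim: ix k => [|i ix IH] k six; first by case: k.
have i_notin := sorted_ord_lt_notin six.
apply: allpairs_uniq_dep => [|x _|].
- apply: allpairs_uniq_dep => [|c _|[c a] [c' a'] _ _ /= [-> ->]] //; exact: iota_uniq.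
- exact: IH (path_sorted six).
move=> _ _ /allpairsPdep[[c a] [r [+ wr ->]]] /allpairsPdep[[c' a'] [r' [+ wr' ->]]] /=.
rewrite !mem_block_shapes => /andP[_ ac] /andP[_ ac'].
have [_ supr] := words_size_supported wr; have [_ supr'] := words_size_supported wr'.
by case/(block_cat_inj i_notin supr supr' ac ac') => -> -> ->.
Qed.
End OneRowWords.

Lemma sum_tuples_enum (R : nmodType) (X : finType) k (P : pred (seq X))
    (F : seq X -> R) (ws : seq (seq X)) :
  uniq ws -> (forall s, (s \in ws) = (size s == k) && P s) ->
  \sum_(T : k.-tuple X | P T) F T = \sum_(s <- ws) F s.
Proof.
move=> ws_uniq mem_ws; rewrite -big_filter -(big_map val xpredT F).
apply: perm_big; apply: uniq_perm => //.
  by rewrite map_inj_uniq ?filter_uniq ?index_enum_uniq //; exact: val_inj.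
move=> s; rewrite mem_ws; apply/mapP/andP => [[T + ->] | [/eqP sk Ps]].
  by rewrite mem_filter size_tuple => /andP[].
by exists (Tuple (introT eqP sk)); rewrite // mem_filter mem_index_enum andbT.
Qed.

Lemma index_enum_sorted n : sorted (@ord_lt n) (index_enum 'I_n).
Proof.
rewrite (_ : index_enum 'I_n = enum 'I_n); last by rewrite enumT; unlock.
by have := iota_ltn_sorted 0 n; rewrite -val_enum_ord sorted_map.
Qed.

Lemma mem_words_all n k (s : seq (letter n)) :
  (s \in words (index_enum 'I_n) k) = (size s == k) && sorted (@lle n) s.
Proof.
apply/idP/andP => [ws | [/eqP <- ss]].
  have [-> _] := words_size_supported ws.
  by split => //; exact: words_sorted (index_enum_sorted n) ws.
apply: words_complete (index_enum_sorted n) ss _.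
by apply/allP => l _; rewrite mem_index_enum.
Qed.

Section GeneratingSeries.
Variables (R : comNzRingType) (n : nat) (y : 'I_n -> R).
Local Notation L := (letter n).
Implicit Types (i : 'I_n) (ix : seq 'I_n) (s r : seq L).

Definition wt s : R :=
  \prod_(i < n) y i ^+ (count (fun l : L => (l.1 == i) && ~~ l.2) s + ((i, true) \in s))%N.

Lemma wt_nil : wt [::] = 1.
Proof. by rewrite /wt big1 // => i _; rewrite expr0. Qed.

Lemma wt_block_cat i ix c a r :
  i \notin ix -> supported ix r -> wt (block i c a ++ r) = y i ^+ ((0 < a) + (c - a)) * wt r.
Proof.
move=> i_notin supr.
have r_no_i j b : j \notin ix -> (j, b) \notin r.
  by move=> j_notin; apply/negP => /(allP supr) /=; rewrite (negbTE j_notin).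
have count_r j : j \notin ix -> count (fun l : L => (l.1 == j) && ~~ l.2) r = 0%N.
  move=> j_notin; apply/eqP; rewrite -leqn0 leqNgt -has_count; apply/hasP => -[[j' b] lr].
  by case/andP => /= /eqP ej _; move: lr; rewrite ej; apply/negP/r_no_i.
rewrite /wt (bigD1 i) //= [in RHS](bigD1 i) //= count_r // (negbTE (r_no_i _ _ i_notin)).
rewrite expr0 mul1r; congr (_ * _).
  rewrite /block !count_cat !count_nseq !mem_cat !mem_nseq (negbTE (r_no_i _ _ i_notin)).
  by rewrite /= count_r // !xpair_eqE !eqxx /= !andbT !andbF !orbF mul0n mul1n addn0 add0n addnC.
apply: eq_bigr => j ji; rewrite /block !count_cat !count_nseq !mem_cat !mem_nseq /=.
by rewrite /= !xpair_eqE [i == j]eq_sym (negbTE ji) !andbF !mul0n.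
Qed.

(* Coefficients of the generating series of all blocks, resp. of blocks
   starting with a primed letter, by length c. *)
Definition blockF i : fps R := fun c => \sum_(a < c.+1) y i ^+ ((0 < a) + (c - a)).
Definition blockG i : fps R :=
  fun c => \sum_(a < c.+1) (0 < a)%:R * y i ^+ ((0 < a) + (c - a)).

Lemma blockF_twoSubT i : blockF i =1 fadd (twoSubT (blockG i)) (fone R).
Proof.
have F_G c : blockF i c = y i ^+ c + blockG i c.
  rewrite /blockF /blockG !big_ord_recl mul0r add0r subn0; congr (_ + _).
  by apply: eq_bigr => a _; rewrite mul1r.
have G_succ c : blockG i c.+1 = y i ^+ c.+1 + blockG i c.
  rewrite /blockG big_ord_recl mul0r add0r [in RHS]big_ord_recl mul0r add0r.
  by rewrite big_ord_recl /= mul1r subn1 add1n.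
case=> [|c]; rewrite /fadd /twoSubT /tshift /fone /= F_G.
  by rewrite /blockG big_ord1 mul0r; ring.
by rewrite G_succ; ring.
Qed.

Definition primed_head s : bool := if s is l :: _ then l.2 else false.

Definition Qgf ix : fps R := fun k => \sum_(s <- words ix k) wt s.
Definition Pgf ix : fps R := fun k => \sum_(s <- words ix k) (primed_head s)%:R * wt s.

Lemma sum_iota0 (F : nat -> R) N : \sum_(c <- iota 0 N) F c = \sum_(c < N) F c.
Proof. by rewrite -(big_mkord xpredT) /index_iota subn0. Qed.

Lemma sum_words_cons (F : seq L -> R) i ix k :
  \sum_(s <- words (i :: ix) k) F s =
  \sum_(c < k.+1) \sum_(a < c.+1) \sum_(r <- words ix (k - c)) F (block i c a ++ r).
Proof.
rewrite words_cons big_allpairs_dep /block_shapes big_allpairs_dep.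
rewrite (sum_iota0 (fun c =>
  \sum_(a <- iota 0 c.+1) \sum_(r <- words ix (k - c)) F (block i c a ++ r))).
by apply: eq_bigr => c _; rewrite sum_iota0.
Qed.

Lemma Qgf_cons i ix :
  sorted (@ord_lt n) (i :: ix) -> Qgf (i :: ix) =1 fmul (blockF i) (Qgf ix).
Proof.
move=> six k; rewrite /Qgf sum_words_cons; apply: eq_bigr => c _.
rewrite mulr_suml; apply: eq_bigr => a _; rewrite mulr_sumr big_seq [in RHS]big_seq.
apply: eq_bigr => r wr; have [_ supr] := words_size_supported wr.
by rewrite (wt_block_cat _ _ (sorted_ord_lt_notin six) supr).
Qed.

(* A word starting with a primed letter either has a nonempty i-block starting
   with i', or an empty i-block followed by a word starting with a prime. *)
Lemma primed_head_block_cat i c a r : primed_head (block i c.+1 a ++ r) = (0 < a)%N.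
Proof. by case: a. Qed.

Lemma Pgf_cons i ix : sorted (@ord_lt n) (i :: ix) ->
  Pgf (i :: ix) =1 fadd (fmul (blockG i) (Qgf ix)) (Pgf ix).
Proof.
move=> six k; rewrite /Pgf /fadd /fmul sum_words_cons !big_ord_recl big_ord0 addr0.
have -> : blockG i 0 = 0 by rewrite /blockG big_ord1 mul0r.
rewrite mul0r add0r addrC subn0; congr (_ + _); apply: eq_bigr => c _.
rewrite lift0 mulr_suml; apply: eq_bigr => a _; rewrite mulr_sumr big_seq [in RHS]big_seq.
apply: eq_bigr => r wr; have [_ supr] := words_size_supported wr.
by rewrite primed_head_block_cat (wt_block_cat _ _ (sorted_ord_lt_notin six) supr) mulrA.
Qed.

Lemma Pgf0 ix : Pgf ix 0 = 0.
Proof.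
rewrite /Pgf big_seq big1 // => s /words_size_supported[/size0nil -> _].
by rewrite mul0r.
Qed.

Lemma Qgf_nil k : Qgf [::] k = (k == 0)%:R.
Proof. by case: k => [|k]; rewrite /Qgf /= ?big_seq1 ?wt_nil ?big_nil. Qed.

Lemma Pgf_nil k : Pgf [::] k = 0.
Proof. by case: k => [|k]; rewrite /Pgf /= ?big_seq1 ?big_nil // mulr0n mul0r. Qed.

Lemma Qgf_twoSubT ix : sorted (@ord_lt n) ix -> Qgf ix =1 fadd (twoSubT (Pgf ix)) (fone R).
Proof.
elim: ix => [|i ix IH] six k.
  rewrite Qgf_nil /fadd (eq_twoSubT Pgf_nil) /twoSubT /tshift /fone.
  by case: k => [|k]; rewrite mulr0 ?subr0 ?add0r.
rewrite (Qgf_cons six) (twoSubT_step (blockF_twoSubT i) (IH (path_sorted six))).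
by rewrite /fadd (eq_twoSubT (Pgf_cons six)).
Qed.

Lemma Delta_factor j :
  fmul (fsub (fone R) (fscale (y j) (tbar (-1)))) (geom (y j)) =1 blockF j.
Proof.
move=> c; apply: eq_bigr => a _; rewrite /geom exprD; congr (_ * _).
rewrite /fsub /fone /tbar /fscale /fmul /tpow /geom opprK.
rewrite (eq_bigr (fun i : 'I_a.+1 => 1 * ((i : nat) == 1%N)%:R)); last first.
  by move=> i _; rewrite expr1n mulr1 mul1r.
rewrite (sum_delta _ _ (fun=> 1)) mul1r.
by case: a => -[|[|a]] _ /=; rewrite ?mulr0n ?mulr1n; ring.
Qed.

Lemma Qgf_prod ix : sorted (@ord_lt n) ix ->
  Qgf ix =1 \big[@fmul R/fone R]_(j <- ix)
                fmul (fsub (fone R) (fscale (y j) (tbar (-1)))) (geom (y j)).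
Proof.
elim: ix => [|i ix IH] six k; first by rewrite Qgf_nil big_nil.
rewrite (Qgf_cons six) big_cons.
exact: eq_fmul (fun c => esym (Delta_factor i c)) (IH (path_sorted six)) k.
Qed.

Lemma Delta_Qgf : Delta (-1) y =1 Qgf (index_enum 'I_n).
Proof. by move=> k; rewrite (Qgf_prod (index_enum_sorted n)). Qed.

Lemma gq_Qgf k : gq y k = Qgf (index_enum 'I_n) k.
Proof.
exact: (sum_tuples_enum (P := sorted (@lle n)) wt
          (words_uniq _ (index_enum_sorted n)) (@mem_words_all n k)).
Qed.

Lemma gp_Pgf k : (0 < k)%N -> gp y k = Pgf (index_enum 'I_n) k.
Proof.
move=> k_gt0; rewrite /gp.
rewrite (eq_bigl (fun T : k.-tuple L => sorted (@lle n) T && primed_head T)); last first.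
  move=> T; rewrite /inTab' /inTab; case: T => -[|l s] //= /eqP sk.
  by move: k_gt0; rewrite -sk.
rewrite big_mkcondr /=.
rewrite (eq_bigr (fun T : k.-tuple L => (primed_head T)%:R * wt T)) => [|T _]; last first.
  by case: (primed_head T); rewrite ?mulr1n ?mulr0n ?mul1r ?mul0r.
exact: (sum_tuples_enum (P := sorted (@lle n)) (fun s => (primed_head s)%:R * wt s)
          (words_uniq _ (index_enum_sorted n)) (@mem_words_all n k)).
Qed.
End GeneratingSeries.

Theorem mainTheorem10 (R : numFieldType) (n : nat) (y : 'I_n -> R) :
  (exists p : nat -> R, IsPhatK (-1) y p) /\
  (forall p : nat -> R, IsPhatK (-1) y p ->
     forall k : nat, (1 <= k)%N -> gp y k = p k) /\
  (forall k : nat, (1 <= k)%N -> gq y k = qhatK (-1) y k).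
Proof.
set P := Pgf y (index_enum 'I_n).
have Delta_P m : Delta (-1) y m = (m == 0)%:R + twoSubT P m.
  apply: etrans (Delta_Qgf y m) _.
  by rewrite (Qgf_twoSubT y (index_enum_sorted n) m) /fadd /fone addrC.
have P_tshift : P =1 tshift (fun k => P k.+1) by case=> [|k] //; rewrite /P Pgf0.
split; [|split].
- exists (fun k => if k is 0 then 1 else P k) => m.
  rewrite (tbrak_expand (fun k => if k is 0 then 1 else P k)) Delta_P mulr1; congr (_ + _).
  exact: eq_twoSubT P_tshift m.
- move=> p p_hat k k_gt0; rewrite gp_Pgf //.
  have same_twoSubT : twoSubT (tshift (fun k => P k.+1)) =1 twoSubT (tshift (fun k => p k.+1)).
    case=> [|m]; first by [].
    by move: (p_hat m.+1); rewrite Delta_P tbrak_expand mulr0n mul0r !add0r (eq_twoSubT P_tshift).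
  have two_neq0 : 2%:R != 0 :> R by rewrite pnatr_eq0.
  by move: k_gt0 (twoSubT_inj two_neq0 same_twoSubT k); case: k.
- by move=> k _; rewrite gq_Qgf /qhatK Delta_Qgf.
Qed.
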